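(* Let $A,B,C$ be non-collinear points of the real affine plane. Let $A^{+},A^{-}$ be points on line $\overleftrightarrow{BC}$, $B^{+},B^{-}$ points on line $\overleftrightarrow{CA}$, and $C^{+},C^{-}$ points on line $\overleftrightarrow{AB}$, with $A^{+}\neq C$, $A^{-}\neq B$, $B^{+}\neq A$, $B^{-}\neq C$, $C^{+}\neq B$, $C^{-}\neq A$. Define $$a^{+}=\frac{|BA^{+}|}{|A^{+}C|},\quad b^{+}=\frac{|CB^{+}|}{|B^{+}A|},\quad c^{+}=\frac{|AC^{+}|}{|C^{+}B|},\quad a^{-}=\frac{|CA^{-}|}{|A^{-}B|},\quad b^{-}=\frac{|AB^{-}|}{|B^{-}C|},\quad c^{-}=\frac{|BC^{-}|}{|C^{-}A|}.$$ Let $\widehat{B^{-}C^{+}}$ be the intersection point of the lines $\overleftrightarrow{BB^{-}}$ and $\overleftrightarrow{CC^{+}}$, $\widehat{C^{-}A^{+}}$ the intersection of $\overleftrightarrow{CC^{-}}$ and $\overleftrightarrow{AA^{+}}$, and $\widehat{A^{-}B^{+}}$ the intersection of $\overleftrightarrow{AA^{-}}$ and $\overleftrightarrow{BB^{+}}$ (intersections taken in the projective plane, so a point may be at infinity when the two lines are parallel). Then these three points lie on a common (projective) line if and only if $$a^{+}b^{+}c^{+}+a^{-}b^{-}c^{-}=-1+a^{+}a^{-}+b^{+}b^{-}+c^{+}c^{-}.$$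
   Context: Segment lengths are signed: for points on one of the lines $\overleftrightarrow{AB}$, $\overleftrightarrow{BC}$, $\overleftrightarrow{CA}$, $|PQ|$ is positive when $\overrightarrow{PQ}$ points in the direction of $\overrightarrow{AB}$, $\overrightarrow{BC}$, $\overrightarrow{CA}$ respectively; with $|PP|/|PQ|=0$. Equivalently, e.g. $A^{+}=(B+a^{+}C)/(1+a^{+})$ and $A^{-}=(a^{-}B+C)/(1+a^{-})$ as vectors, and similarly for the other points. The hypotheses guarantee that each pair of lines whose intersection is taken is a pair of distinct lines. *)

From Stdlib Require Import Reals.
Open Scope R_scope.

Definition pt := (R * R)%type.
Definition px (P : pt) : R := fst P.
Definition py (P : pt) : R := snd P.

Definition vsub (P Q : pt) : pt := (px P - px Q, py P - py Q).
Definition dot (u v : pt) : R := px u * px v + py u * py v.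

Definition collinear (P Q S : pt) : Prop :=
  (px Q - px P) * (py S - py P) - (py Q - py P) * (px S - px P) = 0.

Definition on_line (X P Q : pt) : Prop :=
  exists t : R, X = (px P + t * (px Q - px P), py P + t * (py Q - py P)).

(* Signed length |PQ| measured along direction d (d = the direction vector
   of the line containing P, Q): positive iff PQ points along d. *)
Definition slen (d P Q : pt) : R := dot (vsub Q P) d / sqrt (dot d d).

Definition sratio (d P X Q : pt) : R := slen d P X / slen d X Q.

(* Real projective plane: homogeneous coordinates (nonzero triples). *)
Definition hpt := (R * R * R)%type.
Definition h1 (X : hpt) : R := fst (fst X).
Definition h2 (X : hpt) : R := snd (fst X).
Definition h3 (X : hpt) : R := snd X.
Definition hnonzero (X : hpt) : Prop := ~ (h1 X = 0 /\ h2 X = 0 /\ h3 X = 0).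

Definition lift (P : pt) : hpt := (px P, py P, 1).

Definition hon_line (X : hpt) (P Q : pt) : Prop :=
  exists s t : R,
    h1 X = s * h1 (lift P) + t * h1 (lift Q) /\
    h2 X = s * h2 (lift P) + t * h2 (lift Q) /\
    h3 X = s * h3 (lift P) + t * h3 (lift Q).

Definition hcollinear (X Y Z : hpt) : Prop :=
  exists a b c : R, ~ (a = 0 /\ b = 0 /\ c = 0) /\
    a * h1 X + b * h2 X + c * h3 X = 0 /\
    a * h1 Y + b * h2 Y + c * h3 Y = 0 /\
    a * h1 Z + b * h2 Z + c * h3 Z = 0.

From Stdlib Require Import Reals Lra Psatz.
Open Scope R_scope.

(* In barycentric coordinates with respect to A, B, C, a point P + t (Q - P) of a side
   line cuts it in the signed ratio t / (1 - t), so the cevians B B^- and C C^+ meet at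
   the projective point (1 : c^+ : b^-); likewise the other two intersections are
   (c^- : 1 : a^+) and (b^+ : a^- : 1).  Three projective points are collinear iff their
   homogeneous coordinates have vanishing determinant, and passing to barycentric
   coordinates only multiplies that determinant by the (nonzero) area of ABC.  The
   determinant of the weights is 1 - a^+a^- - b^+b^- - c^+c^- + a^+b^+c^+ + a^-b^-c^-. *)

Definition hdot (n X : hpt) : R := h1 n * h1 X + h2 n * h2 X + h3 n * h3 X.

Definition cross (X Y : hpt) : hpt :=
  (h2 X * h3 Y - h3 X * h2 Y, h3 X * h1 Y - h1 X * h3 Y, h1 X * h2 Y - h2 X * h1 Y).

Definition hdet (X Y Z : hpt) : R := hdot (cross X Y) Z.

Definition hscale (k : R) (X : hpt) : hpt := (k * h1 X, k * h2 X, k * h3 X).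

Lemma hnonzero_dec (V : hpt) : hnonzero V \/ (h1 V = 0 /\ h2 V = 0 /\ h3 V = 0).
Proof.
  unfold hnonzero.
  destruct (Req_dec (h1 V) 0), (Req_dec (h2 V) 0), (Req_dec (h3 V) 0); tauto.
Qed.

Lemma hnonzero_scale_eq0 (V : hpt) (r : R) : hnonzero V ->
  r * h1 V = 0 -> r * h2 V = 0 -> r * h3 V = 0 -> r = 0.
Proof.
  intros hV e1 e2 e3.
  destruct (Req_dec r 0) as [|hr]; [assumption|].
  exfalso; apply hV.
  repeat split; eapply Rmult_eq_reg_l; eauto; lra.
Qed.

Lemma hcollinear_intro (n X Y Z : hpt) : hnonzero n ->
  hdot n X = 0 -> hdot n Y = 0 -> hdot n Z = 0 -> hcollinear X Y Z.
Proof. intros. exists (h1 n), (h2 n), (h3 n). tauto. Qed.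

Lemma hdot_cross_l (X Y : hpt) : hdot (cross X Y) X = 0.
Proof. unfold hdot, cross, h1, h2, h3; simpl; ring. Qed.

Lemma hdot_cross_r (X Y : hpt) : hdot (cross X Y) Y = 0.
Proof. unfold hdot, cross, h1, h2, h3; simpl; ring. Qed.

Lemma hdot_cross_swap (X Y Z : hpt) : hdot (cross X Z) Y = - hdet X Y Z.
Proof. unfold hdet, hdot, cross, h1, h2, h3; simpl; ring. Qed.

Lemma exists_hperp (X : hpt) : exists p, hnonzero p /\ hdot p X = 0.
Proof.
  destruct X as [[x1 x2] x3]; unfold hnonzero, hdot, h1, h2, h3; simpl.
  destruct (Req_dec x1 0) as [h|h].
  - exists (1, 0, 0); simpl; split; [lra | rewrite h; ring].
  - exists (x2, - x1, 0); simpl; split; [lra | ring].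
Qed.

(* [x_i (p.Y) - y_i (p.X)] is a combination of the coordinates of [X x Y]. *)
Lemma hdot_eq0_of_cross_eq0 (p X Y : hpt) : hnonzero X ->
  h1 (cross X Y) = 0 -> h2 (cross X Y) = 0 -> h3 (cross X Y) = 0 ->
  hdot p X = 0 -> hdot p Y = 0.
Proof.
  destruct p as [[p1 p2] p3], X as [[x1 x2] x3], Y as [[y1 y2] y3].
  unfold hdot, cross, h1, h2, h3; simpl. intros hX c1 c2 c3 hpX.
  apply (hnonzero_scale_eq0 _ _ hX); unfold h1, h2, h3; simpl.
  - transitivity (y1 * (p1 * x1 + p2 * x2 + p3 * x3)
      + p2 * (x1 * y2 - x2 * y1) - p3 * (x3 * y1 - x1 * y3)); [ring|].
    rewrite hpX, c2, c3; ring.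
  - transitivity (y2 * (p1 * x1 + p2 * x2 + p3 * x3)
      - p1 * (x1 * y2 - x2 * y1) + p3 * (x2 * y3 - x3 * y2)); [ring|].
    rewrite hpX, c1, c3; ring.
  - transitivity (y3 * (p1 * x1 + p2 * x2 + p3 * x3)
      + p1 * (x3 * y1 - x1 * y3) - p2 * (x2 * y3 - x3 * y2)); [ring|].
    rewrite hpX, c1, c2; ring.
Qed.

(* [det(X,Y,Z) n = (n.X) (Y x Z) + (n.Y) (Z x X) + (n.Z) (X x Y)] *)
Lemma hcollinear_hdet (X Y Z : hpt) : hcollinear X Y Z -> hdet X Y Z = 0.
Proof.
  intros [a [b [c [hn [eX [eY eZ]]]]]].
  destruct X as [[x1 x2] x3], Y as [[y1 y2] y3], Z as [[z1 z2] z3].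
  unfold hdet, hdot, cross, h1, h2, h3 in *; simpl in *.
  set (nX := a * x1 + b * x2 + c * x3) in eX.
  set (nY := a * y1 + b * y2 + c * y3) in eY.
  set (nZ := a * z1 + b * z2 + c * z3) in eZ.
  apply (hnonzero_scale_eq0 (a, b, c)); [exact hn | unfold h1, h2, h3; simpl ..].
  - transitivity (nX * (y2 * z3 - y3 * z2) + nY * (z2 * x3 - z3 * x2) + nZ * (x2 * y3 - x3 * y2));
      [unfold nX, nY, nZ; ring | rewrite eX, eY, eZ; ring].
  - transitivity (nX * (y3 * z1 - y1 * z3) + nY * (z3 * x1 - z1 * x3) + nZ * (x3 * y1 - x1 * y3));
      [unfold nX, nY, nZ; ring | rewrite eX, eY, eZ; ring].
  - transitivity (nX * (y1 * z2 - y2 * z1) + nY * (z1 * x2 - z2 * x1) + nZ * (x1 * y2 - x2 * y1));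
      [unfold nX, nY, nZ; ring | rewrite eX, eY, eZ; ring].
Qed.

Lemma hcollinear_iff_hdet (X Y Z : hpt) : hnonzero X ->
  hcollinear X Y Z <-> hdet X Y Z = 0.
Proof.
  intro hX; split; [apply hcollinear_hdet | intro hd].
  destruct (hnonzero_dec (cross X Y)) as [hXY | [c1 [c2 c3]]].
  - apply (hcollinear_intro (cross X Y)); auto using hdot_cross_l, hdot_cross_r.
  - destruct (hnonzero_dec (cross X Z)) as [hXZ | [d1 [d2 d3]]].
    + apply (hcollinear_intro (cross X Z)); auto using hdot_cross_l, hdot_cross_r.
      rewrite hdot_cross_swap, hd; ring.
    + destruct (exists_hperp X) as [p [hp hpX]].
      apply (hcollinear_intro p); eauto using hdot_eq0_of_cross_eq0.
Qed.

Lemma hdet_hscale (k l m : R) (X Y Z : hpt) :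
  hdet (hscale k X) (hscale l Y) (hscale m Z) = k * l * m * hdet X Y Z.
Proof. unfold hdet, hdot, cross, hscale, h1, h2, h3; simpl; ring. Qed.

Definition lerp (P Q : pt) (t : R) : pt :=
  (px P + t * (px Q - px P), py P + t * (py Q - py P)).

Definition area2 (P Q S : pt) : R :=
  (px Q - px P) * (py S - py P) - (py Q - py P) * (px S - px P).

Definition bary (w : hpt) (P Q S : pt) : hpt :=
  (h1 w * px P + h2 w * px Q + h3 w * px S,
   h1 w * py P + h2 w * py Q + h3 w * py S,
   h1 w + h2 w + h3 w).

Lemma lerp_1 (P Q : pt) : lerp P Q 1 = Q.
Proof. destruct Q; unfold lerp, px, py; simpl; f_equal; ring. Qed.

Lemma on_line_sym (X P Q : pt) : on_line X P Q -> on_line X Q P.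
Proof.
  intros [t ->]; exists (1 - t); unfold px, py; simpl; f_equal; ring.
Qed.

Lemma area2_rot (P Q S : pt) : area2 Q S P = area2 P Q S.
Proof. unfold area2; ring. Qed.

Lemma area2_neq0_neq (P Q S : pt) : area2 P Q S <> 0 -> P <> Q.
Proof. intros h ->; apply h; unfold area2; ring. Qed.

Lemma dot_self_eq0 (d : pt) : dot d d = 0 -> d = (0, 0).
Proof.
  destruct d as [d1 d2]; unfold dot, px, py; simpl; intro h.
  destruct (Rplus_sqr_eq_0 d1 d2 h) as [-> ->]; reflexivity.
Qed.

Lemma dot_vsub_self_neq0 (P Q : pt) : P <> Q -> dot (vsub P Q) (vsub P Q) <> 0.
Proof.
  intros hPQ h; apply hPQ; apply dot_self_eq0 in h.
  destruct P as [p1 p2], Q as [q1 q2]; unfold vsub, px, py in h; simpl in h.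
  injection h; intros; f_equal; lra.
Qed.

Lemma dot_vsub_opp_neq0 (P Q : pt) : P <> Q -> dot (vsub P Q) (vsub Q P) <> 0.
Proof.
  intros hPQ h; apply (dot_vsub_self_neq0 P Q hPQ).
  replace (dot (vsub P Q) (vsub P Q)) with (- dot (vsub P Q) (vsub Q P))
    by (unfold dot, vsub, px, py; simpl; ring).
  rewrite h; ring.
Qed.

Lemma sratio_lerp (d P Q : pt) (t : R) : dot (vsub Q P) d <> 0 -> t <> 1 ->
  sratio d P (lerp P Q t) Q = t / (1 - t).
Proof.
  intros hd ht.
  assert (hdd : sqrt (dot d d) <> 0).
  { intro h0; apply sqrt_eq_0 in h0; [| unfold dot; nra].
    apply hd; rewrite (dot_self_eq0 d h0); unfold dot, px, py; simpl; ring. }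
  assert (E1 : dot (vsub (lerp P Q t) P) d = t * dot (vsub Q P) d)
    by (unfold dot, vsub, lerp, px, py; simpl; ring).
  assert (E2 : dot (vsub Q (lerp P Q t)) d = (1 - t) * dot (vsub Q P) d)
    by (unfold dot, vsub, lerp, px, py; simpl; ring).
  unfold sratio, slen; rewrite E1, E2.
  field; repeat split; auto; lra.
Qed.

Lemma foot_param (P Q F : pt) : P <> Q -> on_line F P Q -> F <> Q ->
  exists t, t <> 1 /\ F = lerp P Q t /\
    sratio (vsub Q P) P F Q = t / (1 - t) /\ sratio (vsub P Q) P F Q = t / (1 - t).
Proof.
  intros hPQ [t hF] hFQ.
  change (F = lerp P Q t) in hF; subst F.
  assert (ht : t <> 1) by (intros ->; apply hFQ; apply lerp_1).
  exists t; repeat split; auto using sratio_lerp, dot_vsub_opp_neq0.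
  apply sratio_lerp; [apply dot_vsub_self_neq0, not_eq_sym |]; assumption.
Qed.

Lemma bary_eq0 (w : hpt) (P Q S : pt) : area2 P Q S <> 0 ->
  h1 (bary w P Q S) = 0 -> h2 (bary w P Q S) = 0 -> h3 (bary w P Q S) = 0 ->
  h1 w = 0 /\ h2 w = 0 /\ h3 w = 0.
Proof.
  destruct w as [[w1 w2] w3], P as [p1 p2], Q as [q1 q2], S as [s1 s2].
  unfold bary, area2, h1, h2, h3, px, py; simpl.
  set (D := (q1 - p1) * (s2 - p2) - (q2 - p2) * (s1 - p1)).
  intros hD e1 e2 e3.
  (* Cramer's rule for the system with columns [lift P], [lift Q], [lift S]. *)
  assert (E1 : D * w1 = (q2 - s2) * (w1 * p1 + w2 * q1 + w3 * s1)
     + (s1 - q1) * (w1 * p2 + w2 * q2 + w3 * s2) + (q1 * s2 - s1 * q2) * (w1 + w2 + w3))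
    by (unfold D; ring).
  assert (E2 : D * w2 = (s2 - p2) * (w1 * p1 + w2 * q1 + w3 * s1)
     + (p1 - s1) * (w1 * p2 + w2 * q2 + w3 * s2) + (s1 * p2 - p1 * s2) * (w1 + w2 + w3))
    by (unfold D; ring).
  rewrite e1, e2, e3 in E1, E2.
  assert (z1 : w1 = 0) by (apply (Rmult_eq_reg_l D); lra).
  assert (z2 : w2 = 0) by (apply (Rmult_eq_reg_l D); lra).
  repeat split; lra.
Qed.

Lemma cevian_meet (P Q S : pt) (s t : R) (X : hpt) :
  area2 P Q S <> 0 -> s <> 1 -> t <> 1 -> hnonzero X ->
  hon_line X Q (lerp P S s) -> hon_line X S (lerp P Q t) ->
  exists k, k <> 0 /\ X = hscale k (bary (1, t / (1 - t), s / (1 - s)) P Q S).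
Proof.
  intros hPQS hs ht hX [a [b [ea1 [ea2 ea3]]]] [c [d [ec1 [ec2 ec3]]]].
  destruct X as [[x1 x2] x3].
  unfold lift, lerp, h1, h2, h3, px, py in *; simpl in *.
  (* X = b(1-s) P + a Q + bs S = d(1-t) P + dt Q + c S, and the weights are unique. *)
  destruct (bary_eq0 (b * (1 - s) - d * (1 - t), a - d * t, b * s - c) P Q S hPQS)
    as [w1 [w2 w3]]; unfold bary, h1, h2, h3, px, py in *; simpl in *; try nra.
  assert (hd : d = b * (1 - s) / (1 - t)) by (field_simplify_eq; lra).
  assert (hk : b * (1 - s) <> 0).
  { intro hk; apply hX.
    assert (hb : b = 0) by (destruct (Rmult_integral _ _ hk); lra).
    rewrite hk in hd; unfold Rdiv in hd; rewrite Rmult_0_l in hd.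
    subst b d.
    assert (a = 0) by lra; assert (c = 0) by lra; subst a c.
    unfold h1, h2, h3; simpl; repeat split; lra. }
  exists (b * (1 - s)); split; [exact hk |].
  unfold hscale, h1, h2, h3; simpl; rewrite ea1, ea2, ea3.
  replace a with (d * t) by lra; replace c with (b * s) by lra; rewrite hd.
  f_equal; [f_equal |]; field; lra.
Qed.

Lemma bary_rot (w : hpt) (P Q S : pt) :
  bary w Q S P = bary (h3 w, h1 w, h2 w) P Q S.
Proof. unfold bary, h1, h2, h3; simpl; f_equal; [f_equal |]; ring. Qed.

Lemma hdet_bary (u v w : hpt) (P Q S : pt) :
  hdet (bary u P Q S) (bary v P Q S) (bary w P Q S) = area2 P Q S * hdet u v w.
Proof. unfold hdet, hdot, cross, bary, area2, h1, h2, h3; simpl; ring. Qed.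

Theorem theorem3 (A B C Ap Am Bp Bm Cp Cm : pt)
  (hABC : ~ collinear A B C)
  (hAp : on_line Ap B C) (hAm : on_line Am B C)
  (hBp : on_line Bp C A) (hBm : on_line Bm C A)
  (hCp : on_line Cp A B) (hCm : on_line Cm A B)
  (nAp : Ap <> C) (nAm : Am <> B) (nBp : Bp <> A) (nBm : Bm <> C)
  (nCp : Cp <> B) (nCm : Cm <> A)
  (X Y Z : hpt) (hX0 : hnonzero X) (hY0 : hnonzero Y) (hZ0 : hnonzero Z)
  (hX1 : hon_line X B Bm) (hX2 : hon_line X C Cp)
  (hY1 : hon_line Y C Cm) (hY2 : hon_line Y A Ap)
  (hZ1 : hon_line Z A Am) (hZ2 : hon_line Z B Bp) :
  let dAB := vsub B A in let dBC := vsub C B in let dCA := vsub A C in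
  let ap := sratio dBC B Ap C in
  let bp := sratio dCA C Bp A in
  let cp := sratio dAB A Cp B in
  let am := sratio dBC C Am B in
  let bm := sratio dCA A Bm C in
  let cm := sratio dAB B Cm A in
  hcollinear X Y Z <->
  ap * bp * cp + am * bm * cm = -1 + ap * am + bp * bm + cp * cm.
Proof.
  intros dAB dBC dCA ap bp cp am bm cm.
  change (area2 A B C <> 0) in hABC.
  assert (hBCA : area2 B C A <> 0) by (rewrite area2_rot; exact hABC).
  assert (hCAB : area2 C A B <> 0) by (rewrite area2_rot; exact hBCA).
  pose proof (area2_neq0_neq _ _ _ hABC) as nAB.
  pose proof (area2_neq0_neq _ _ _ hBCA) as nBC.
  pose proof (area2_neq0_neq _ _ _ hCAB) as nCA.
  destruct (foot_param B C Ap nBC hAp nAp) as [x [nx [-> [Eap _]]]].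
  destruct (foot_param C B Am (not_eq_sym nBC) (on_line_sym _ _ _ hAm) nAm)
    as [y [ny [-> [_ Eam]]]].
  destruct (foot_param C A Bp nCA hBp nBp) as [z [nz [-> [Ebp _]]]].
  destruct (foot_param A C Bm (not_eq_sym nCA) (on_line_sym _ _ _ hBm) nBm)
    as [u [nu [-> [_ Ebm]]]].
  destruct (foot_param A B Cp nAB hCp nCp) as [v [nv [-> [Ecp _]]]].
  destruct (foot_param B A Cm (not_eq_sym nAB) (on_line_sym _ _ _ hCm) nCm)
    as [w [nw [-> [_ Ecm]]]].
  rewrite (hcollinear_iff_hdet X Y Z hX0).
  destruct (cevian_meet A B C u v X hABC nu nv hX0 hX1 hX2) as [kX [nkX ->]].
  destruct (cevian_meet B C A w x Y hBCA nw nx hY0 hY1 hY2) as [kY [nkY ->]].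
  destruct (cevian_meet C A B y z Z hCAB ny nz hZ0 hZ1 hZ2) as [kZ [nkZ ->]].
  fold dAB dBC dCA ap am bp bm cp cm in Eap, Eam, Ebp, Ebm, Ecp, Ecm.
  rewrite <- Eap, <- Eam, <- Ebp, <- Ebm, <- Ecp, <- Ecm.
  rewrite (bary_rot _ B C A), !(bary_rot _ A B C), hdet_hscale, hdet_bary.
  set (W := hdet _ _ _).
  assert (EW : W = 1 - ap * am - bp * bm - cp * cm + ap * bp * cp + am * bm * cm)
    by (unfold W, hdet, hdot, cross, h1, h2, h3; simpl; ring).
  assert (hk : kX * kY * kZ * area2 A B C <> 0)
    by (repeat apply Rmult_integral_contrapositive_currified; assumption).
  rewrite <- Rmult_assoc, EW; split; intro H.
  - destruct (Rmult_integral _ _ H); [contradiction | lra].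
  - replace (1 - ap * am - bp * bm - cp * cm + ap * bp * cp + am * bm * cm) with 0 by lra.
    ring.
Qed.
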